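(* Let $\tau\in\mathcal{L}$. Then $C(\tau)$ is closed in the Euclidean space $\mathbb{R}$, and moreover $C(\tau)$ is closed and meager in the space $(\mathbb{R},\tau)$.
   Context: $\eta$ denotes the Euclidean topology on $\mathbb{R}$. $\mathcal{L}$ denotes the family of all Hausdorff topologies $\tau$ on $\mathbb{R}$ with $\tau\subset\eta$. For $\tau\in\mathcal{L}$ and $a\in\mathbb{R}$ let $\mathcal{N}_\tau(a)$ be the neighborhood filter of $a$ in $(\mathbb{R},\tau)$; $C(\tau)$ is the set of all $a\in\mathbb{R}$ with $\mathcal{N}_\tau(a)\neq\mathcal{N}_\eta(a)$. *)

(* The Euclidean topology on R : realType is the
   library topology ([open], [closed], [nbhs]); coarser topologies tau are
   represented by their family of open sets. *)
From HB Require Import structures.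
From mathcomp Require Import all_boot all_order all_algebra.
From mathcomp Require Import all_classical all_reals all_analysis.
Set Implicit Arguments. Unset Strict Implicit. Unset Printing Implicit Defensive.
Import Order.TTheory GRing.Theory Num.Theory numFieldNormedType.Exports.
Local Open Scope classical_set_scope.

Section GenTop.
Variable T : Type.

Definition is_topology (O : set (set T)) : Prop :=
  [/\ O setT, O set0,
      (forall U V, O U -> O V -> O (U `&` V)) &
      (forall S : set (set T), S `<=` O -> O (\bigcup_(U in S) U))].

Definition hausdorff_top (O : set (set T)) : Prop :=
  forall x y : T, x <> y ->
    exists U V, [/\ O U, O V, U x, V y & U `&` V = set0].

Definition nbhs_top (O : set (set T)) (a : T) : set (set T) :=
  [set A | exists U, [/\ O U, U a & U `<=` A]].

Definition closed_top (O : set (set T)) (A : set T) : Prop := O (~` A).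

Definition closure_top (O : set (set T)) (A : set T) : set T :=
  [set x | forall U, O U -> U x -> U `&` A !=set0].

Definition interior_top (O : set (set T)) (A : set T) : set T :=
  [set x | exists U, [/\ O U, U x & U `<=` A]].

Definition nowhere_dense_top (O : set (set T)) (A : set T) : Prop :=
  interior_top O (closure_top O A) = set0.

Definition meager_top (O : set (set T)) (A : set T) : Prop :=
  exists F : nat -> set T,
    (forall n, nowhere_dense_top O (F n)) /\ A `<=` \bigcup_n F n.
End GenTop.

Definition in_L (R : realType) (tau : set (set R)) : Prop :=
  [/\ is_topology tau, hausdorff_top tau & (forall U, tau U -> open U)].

Definition Cset (R : realType) (tau : set (set R)) : set R :=
  [set a | nbhs_top tau a <> nbhs a].

(* A compact Euclidean set is compact for the coarser Hausdorff topology tau,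
   hence tau-closed; in particular bounded closed intervals are tau-closed.
   So if a tau-open set V around a lies in a bounded interval [p, q], removing
   the tau-closed pieces [p, a - e] and [a + e, q] from V leaves a tau-open
   subset of the Euclidean ball of radius e around a: the two neighborhood
   filters agree at a, and at every other point of V.  Thus the complement of
   C(tau) is a union of bounded tau-open sets, so C(tau) is tau-closed (and a
   fortiori Euclidean closed).  Each C(tau) ∩ [-n, n] is then tau-closed, and
   a tau-open set inside it would be bounded and hence miss C(tau): these
   pieces are nowhere dense and cover C(tau). *)
From mathcomp Require Import all_boot all_order all_algebra.
From mathcomp Require Import all_classical all_reals all_analysis.
From mathcomp Require Import lra.
Set Implicit Arguments. Unset Strict Implicit. Unset Printing Implicit Defensive.
Import numFieldNormedType.Exports.
Import Order.TTheory GRing.Theory Num.Theory.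
Local Open Scope classical_set_scope.
Local Open Scope ring_scope.

Section OpenSetTopology.
Variables (T : Type) (O : set (set T)).

Lemma closure_top_sub (A B : set T) :
  closed_top O B -> A `<=` B -> closure_top O A `<=` B.
Proof.
move=> OnB AB x clAx; apply: contrapT => nBx.
by have [y [nBy /AB]] := clAx _ OnB nBx.
Qed.

Hypothesis O_top : is_topology O.

Lemma open_top_nbhs_top (A : set T) :
  (forall x, A x -> nbhs_top O x A) -> O A.
Proof.
move=> AO; case: O_top => _ _ _ O_bigcup.
have -> : A = \bigcup_(U in [set U | O U /\ U `<=` A]) U.
  apply/seteqP; split => [x /AO [U [OU Ux UA]]|x [U [_ UA] /UA //]].
  by exists U.
by apply: O_bigcup => U [].
Qed.

End OpenSetTopology.

Section CoarserHausdorffTopology.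
Variables (T : topologicalType) (tau : set (set T)).
Hypotheses (tau_top : is_topology tau) (tau_hausdorff : hausdorff_top tau).
Hypothesis tau_open : forall U, tau U -> open U.

Lemma nbhs_top_sub_nbhs (a : T) : nbhs_top tau a `<=` nbhs a.
Proof.
move=> A [U [tU Ua UA]]; apply: filterS UA _.
by apply: open_nbhs_nbhs; split => //; exact: tau_open.
Qed.

Lemma compact_separated_top (K : set T) (x : T) :
  compact K -> ~ K x -> exists V, [/\ tau V, V x & V `&` K = set0].
Proof.
move=> cK nKx; apply: contrapT => noV.
case: tau_top => tT _ tI _.
pose F := filter_from [set V | tau V /\ V x] (fun V => V `&` K).
have F_proper : ProperFilter F.
  apply: filter_from_proper; last first.
    by move=> V [tV Vx]; apply/set0P/eqP => VK0; apply: noV; exists V.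
  apply: filter_from_filter; first by exists setT.
  move=> V W [tV Vx] [tW Wx]; exists (V `&` W); first by split; [exact: tI|].
  by move=> y [[? ?] ?].
have FK : F K by exists setT => // y [].
have [y [Ky Fy]] := cK F F_proper FK.
have xy : x <> y by move=> exy; apply: nKx; rewrite exy.
have [U [W [tU tW Ux Wy UW0]]] := tau_hausdorff xy.
have FUK : F (U `&` K) by exists U.
have nbhsW : nbhs y W by apply: nbhs_top_sub_nbhs; exists W; split.
have [z [[Uz _] Wz]] := Fy _ _ FUK nbhsW.
by have : (U `&` W) z by []; rewrite UW0.
Qed.

Lemma compact_closed_top (K : set T) : compact K -> closed_top tau K.
Proof.
move=> cK; apply: (open_top_nbhs_top tau_top) => x nKx.
have [V [tV Vx VK0]] := compact_separated_top cK nKx.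
exists V; split=> // y Vy Ky.
by have : (V `&` K) y by []; rewrite VK0.
Qed.

End CoarserHausdorffTopology.

Section CoarserTopologyOnReals.
Variables (R : realType) (tau : set (set R)).
Hypothesis tauL : in_L tau.

Let tau_top : is_topology tau. Proof. by case: tauL. Qed.
Let tau_hausdorff : hausdorff_top tau. Proof. by case: tauL. Qed.
Let tau_open : forall U, tau U -> open U. Proof. by case: tauL. Qed.

Lemma itv_closed_top (p q : R) : closed_top tau `[p, q].
Proof. exact (compact_closed_top tau_top tau_hausdorff tau_open (@segment_compact R p q)). Qed.

Lemma nbhs_top_bounded (V : set R) (a p q : R) :
  tau V -> V a -> V `<=` `[p, q] -> nbhs_top tau a = nbhs a.
Proof.
move=> tV Va Vpq; case: tau_top => _ _ tI _.
apply/seteqP; split; first exact: (nbhs_top_sub_nbhs (T := R) tau_open).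
move=> A /nbhs_ballP [e /= e0 ballA].
exists (V `&` ~` `[p, a - e / 2] `&` ~` `[a + e / 2, q]); split.
- by apply: (tI); [apply: (tI) => //|]; exact (itv_closed_top _ _).
- split; [split => //|]; apply/negP; rewrite /= in_itv /= negb_and -!ltNge.
    by apply/orP; right; lra.
  by apply/orP; left; lra.
- move=> y [[/[dup] Vy /Vpq]]; rewrite /= !in_itv /= => /andP [py yq].
  move=> /negP + /negP; rewrite py yq /= andbT -!ltNge => y_gt y_lt.
  by apply: ballA; rewrite -ball_normE /ball_ /= ltr_norml; apply/andP; split; lra.
Qed.

Lemma Cset_closed_top : closed_top tau (Cset tau).
Proof.
apply: (open_top_nbhs_top tau_top) => a /contrapT nCa.
have : nbhs a `[a - 1, a + 1]%classic.
  apply/nbhs_ballP; exists 1 => //= y.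
  rewrite -ball_normE /ball_ /= ltr_norml in_itv /= => /andP [? ?].
  by apply/andP; split; lra.
rewrite -nCa => -[U [tU Ua Ubnd]]; exists U; split=> // y Uy.
by rewrite /Cset /= (nbhs_top_bounded tU Uy Ubnd).
Qed.

Lemma Cset_closed : closed (Cset tau).
Proof.
by rewrite -[Cset _]setCK; apply/open_closedC/tau_open/Cset_closed_top.
Qed.

Lemma nowhere_dense_Cset_itv (p q : R) :
  nowhere_dense_top tau (Cset tau `&` `[p, q]).
Proof.
apply/seteqP; split => // a [U [tU Ua Ucl]].
have UCpq : U `<=` Cset tau `&` `[p, q].
  move=> y /Ucl cly; split.
  - exact (closure_top_sub Cset_closed_top (@subIsetl _ _ _) cly).
  - exact (closure_top_sub (itv_closed_top p q) (@subIsetr _ _ _) cly).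
have [Ca _] := UCpq a Ua.
by apply: Ca; exact: nbhs_top_bounded tU Ua (fun y Uy => (UCpq y Uy).2).
Qed.

Lemma Cset_meager : meager_top tau (Cset tau).
Proof.
exists (fun n => Cset tau `&` `[- n%:R, n%:R]); split=> [n|a Ca].
  exact: nowhere_dense_Cset_itv.
exists (Num.truncn `|a|).+1 => //; split=> //.
rewrite /= in_itv /= -ler_norml; apply: ltW; exact: truncnS_gt.
Qed.

End CoarserTopologyOnReals.

Theorem proposition3 (R : realType) (tau : set (set R)) :
  in_L tau ->
  [/\ closed (Cset tau), closed_top tau (Cset tau) & meager_top tau (Cset tau)].
Proof.
move=> tauL; split; [exact: Cset_closed | exact: Cset_closed_top | exact: Cset_meager].
Qed.
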